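(* Let $S_A = A_{II} - A_{IL}A_{LL}^{-1}A_{LI}$ and $S_M = M_{II} - A_{IL}A_{LL}^{-1}A_{LI}$. Then $M^{-1}A$ has (at least) $N_L$ eigenvalues equal to 1, with eigenvectors $\vec{e}^{(k)}$ for $1\leq k \leq N_L$. The other $N_I$ eigenvalues are the eigenvalues of $S_M^{-1}S_A$.
   Context: Let $A$ be an $N\times N$ matrix (in the paper, the upwind finite-difference discretization matrix of $-\varepsilon u'' - c(x)u' + r(x)u = f$ on $(0,1)$ with homogeneous Dirichlet conditions, on a mesh $0=x_0<\dots<x_N=1$). Partition the unknowns into a layer set $L$ (the first $N_L$ indices, meshpoints where meshwidths are $\mathcal{O}(\varepsilon/N)$, including the transition point) and an interior set $I$ (the remaining $N_I$ indices, meshwidths $\mathcal{O}(1/N)$), with $N = N_L + N_I$, so that $A = \begin{bmatrix} A_{LL} & A_{LI} \\ A_{IL} & A_{II}\end{bmatrix}$. Let $M_{II}$ be the upper triangular part (including the diagonal) of $A_{II}$, and define the preconditioner $M = \begin{bmatrix} A_{LL} & A_{LI} \\ A_{IL} & M_{II}\end{bmatrix}$. $\vec{e}^{(k)}$ denotes the $k$-th canonical unit vector of length $N$. The relevant matrices ($A_{LL}$, $S_A$, $S_M$) are assumed invertible. *)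

From HB Require Import structures.
From mathcomp Require Import all_boot all_order all_algebra.
Set Implicit Arguments. Unset Strict Implicit. Unset Printing Implicit Defensive.
Import Order.TTheory GRing.Theory Num.Theory.
Local Open Scope ring_scope.

Definition upper_part (F : fieldType) (n : nat) (B : 'M[F]_n) : 'M[F]_n :=
  \matrix_(i < n, j < n) (if (i <= j)%N then B i j else 0).

(* Preconditioner M: same as A except the II block is replaced by its
   upper triangular part.  Blocks: L = first NL indices, I = last NI. *)
Definition precond (F : fieldType) (NL NI : nat) (A : 'M[F]_(NL + NI))
  : 'M[F]_(NL + NI) :=
  block_mx (ulsubmx A) (ursubmx A) (dlsubmx A) (upper_part (drsubmx A)).

Definition schurA (F : fieldType) (NL NI : nat) (A : 'M[F]_(NL + NI)) : 'M[F]_NI :=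
  drsubmx A - dlsubmx A *m invmx (ulsubmx A) *m ursubmx A.

Definition schurM (F : fieldType) (NL NI : nat) (A : 'M[F]_(NL + NI)) : 'M[F]_NI :=
  upper_part (drsubmx A) - dlsubmx A *m invmx (ulsubmx A) *m ursubmx A.

Definition unit_vec (F : fieldType) (n : nat) (k : 'I_n) : 'cV[F]_n :=
  delta_mx k 0.

From HB Require Import structures.
From mathcomp Require Import all_boot all_order all_algebra.
Import GRing.Theory.
Local Open Scope ring_scope.

(* M and A differ only in the lower right block, by E = A_II - M_II.  The block
   LU factorisation of M through its Schur complement S_M shows that M is
   invertible and that M^-1 A = 1 + M^-1 diag(0, E) is block upper triangular
   with diagonal blocks 1 and 1 + S_M^-1 E = S_M^-1 S_A (as S_A = S_M + E). *)

Definition schur_compl {F : fieldType} {n1 n2 : nat} (P : 'M[F]_n1)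
    (Q : 'M[F]_(n1, n2)) (R : 'M[F]_(n2, n1)) (D : 'M[F]_n2) : 'M[F]_n2 :=
  D - R *m invmx P *m Q.

Section SchurComplement.

Variables (F : fieldType) (n1 n2 : nat).
Variables (P : 'M[F]_n1) (Q : 'M[F]_(n1, n2)) (R : 'M[F]_(n2, n1)).
Hypothesis P_unit : P \in unitmx.

Lemma block_mx_LU (D : 'M[F]_n2) :
  block_mx P Q R D =
  block_mx 1%:M 0 (R *m invmx P) 1%:M *m block_mx P Q 0 (schur_compl P Q R D).
Proof.
rewrite mulmx_block !mul1mx !mul0mx !addr0 mulmxKV //.
by rewrite /schur_compl addrC subrK.
Qed.

Lemma unitmx_block_schur (D : 'M[F]_n2) :
  schur_compl P Q R D \in unitmx -> block_mx P Q R D \in unitmx.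
Proof.
move=> T_unit; rewrite unitmxE block_mx_LU det_mulmx det_lblock det_ublock.
by rewrite !det1 !mul1r unitrM -!unitmxE P_unit.
Qed.

Lemma schur_complB (D D' : 'M[F]_n2) :
  schur_compl P Q R D' = schur_compl P Q R D + (D' - D).
Proof. by rewrite /schur_compl addrAC [D + _]addrC subrK. Qed.

Lemma invmx_block_mul_block (D D' : 'M[F]_n2) :
  let T := schur_compl P Q R D in
  T \in unitmx ->
  invmx (block_mx P Q R D) *m block_mx P Q R D' =
  block_mx 1%:M (- (invmx P *m Q *m (invmx T *m (D' - D)))) 0
           (invmx T *m schur_compl P Q R D').
Proof.
move=> T T_unit; set W := invmx T *m (D' - D).
have TW : T *m W = D' - D by rewrite mulKVmx.
have corner : invmx T *m schur_compl P Q R D' = 1%:M + W.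
  by rewrite (schur_complB D) mulmxDr mulVmx.
have M_unit : block_mx P Q R D \in unitmx by exact: unitmx_block_schur.
rewrite corner; apply: (canLR (mulKmx M_unit)); clearbody W.
rewrite mulmx_block !mulmx0 !addr0 !mulmx1; congr block_mx.
  by rewrite mulmxN !mulmxA mulmxV // mul1mx mulmxDr mulmx1 addrCA addNr addr0.
rewrite mulmxN mulmxDr !mulmxA addrCA -mulNmx -mulmxDl [- _ + D]addrC -/T.
by rewrite TW mulmx1 addrC subrK.
Qed.

End SchurComplement.

Lemma char_poly_ublock (R : comNzRingType) n1 n2 (X : 'M[R]_n1)
    (Y : 'M[R]_(n1, n2)) (W : 'M[R]_n2) :
  char_poly (block_mx X Y 0 W) = char_poly X * char_poly W.
Proof.
rewrite /char_poly /char_poly_mx map_block_mx (scalar_mx_block n1 n2) map_mx0.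
by rewrite opp_block_mx add_block_mx oppr0 !add0r det_ublock.
Qed.

Lemma char_poly1 (R : comNzRingType) n :
  char_poly (1%:M : 'M[R]_n) = ('X - 1%:P) ^+ n.
Proof.
rewrite /char_poly /char_poly_mx.
have -> : map_mx (@polyC R) (1%:M : 'M[R]_n) = (1%:P)%:M.
  by apply/matrixP=> i j; rewrite !mxE; case: (i == j).
by rewrite -raddfB det_scalar.
Qed.

Lemma mul_ublock1_unit_vec_lshift (F : fieldType) n1 n2 (B : 'M[F]_(n1, n2))
    (C : 'M[F]_n2) (k : 'I_n1) :
  block_mx 1%:M B 0 C *m unit_vec F (lshift n2 k) = unit_vec F (lshift n2 k).
Proof.
by rewrite /unit_vec delta_mx_ushift mul_block_col !mulmx0 !addr0 mul1mx mul0mx.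
Qed.

Theorem theorem2p1 (F : fieldType) (NL NI : nat) (A : 'M[F]_(NL + NI)) :
  ulsubmx A \in unitmx ->
  schurA A \in unitmx ->
  schurM A \in unitmx ->
  (forall k : 'I_NL,
     (invmx (precond A) *m A) *m unit_vec F (lshift NI k)
       = 1 *: unit_vec F (lshift NI k)) /\
  char_poly (invmx (precond A) *m A)
    = ('X - 1%:P) ^+ NL * char_poly (invmx (schurM A) *m schurA A).
Proof.
move=> P_unit _ SM_unit.
have [Z ->] : exists Z, invmx (precond A) *m A =
    block_mx 1%:M Z 0 (invmx (schurM A) *m schurA A).
  by eexists; rewrite -[in X in _ *m X](submxK A) invmx_block_mul_block.
split=> [k|]; first by rewrite scale1r mul_ublock1_unit_vec_lshift.
by rewrite char_poly_ublock char_poly1.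
Qed.
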